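(* If $(\gamma_0,\ldots,\gamma_{\lfloor d/2\rfloor})$ is an $f$-vector (i.e., the $f$-vector of some simplicial complex), then the $g$-vector $(g_0,\ldots,g_{\lfloor d/2\rfloor})$ is a pure $f$-vector (and hence a pure $M$-vector as well). In particular, $(h_0,\ldots,h_d)$ is an SI-sequence.
   Context: Let $(h_0,\ldots,h_d)\in\mathbb{Z}^{d+1}$ be a sequence of integers with $h_0 = 1$ and $h_i = h_{d-i}$ for each $0\leqslant i\leqslant d$. Consider the palindromic polynomial $h(x) = \sum_{i=0}^d h_i x^i$ and its $\gamma$-expansion $h(x) = \sum_{i=0}^{\lfloor d/2\rfloor} \gamma_i\, x^i(1+x)^{d-2i}$. The $g$-vector is $(g_0,\ldots,g_{\lfloor d/2\rfloor})$ with $g_0 = h_0 = 1$ and $g_i = h_i - h_{i-1}$ for $1\leqslant i\leqslant \lfloor d/2\rfloor$. A sequence is an $f$-vector if it is the $f$-vector $(f_0,f_1,\ldots)$ of a simplicial complex ($f_i$ = number of faces of cardinality $i$), and a pure $f$-vector if the complex can be taken pure; it is an $M$-vector if there is a multicomplex whose degree-$i$ monomials are counted by its $i$-th entry (pure $M$-vector if the multicomplex is pure). An SI-sequence is a sequence $(h_0,\ldots,h_d)$ with $h_0=1$, $h_i=h_{d-i}$, and whose $g$-vector is an $M$-vector. *)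

From HB Require Import structures.
From mathcomp Require Import all_boot all_order all_algebra.
Set Implicit Arguments. Unset Strict Implicit. Unset Printing Implicit Defensive.
Import Order.TTheory GRing.Theory Num.Theory.
Local Open Scope ring_scope.

Definition simplicial_complex (n : nat) (D : {set {set 'I_n}}) : Prop :=
  forall F G : {set 'I_n}, F \in D -> G \subset F -> G \in D.

Definition is_facet (n : nat) (D : {set {set 'I_n}}) (F : {set 'I_n}) : Prop :=
  F \in D /\ forall G : {set 'I_n}, G \in D -> F \subset G -> G = F.

Definition pure_complex (n : nat) (D : {set {set 'I_n}}) : Prop :=
  forall F G, is_facet D F -> is_facet D G -> #|F| = #|G|.

(* f_i(D) = number of faces of cardinality i; the finite sequence a is the
   f-vector of D when f_i(D) = a_i for all i (so f_i(D) = 0 beyond size a). *)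
Definition has_fvector (n : nat) (D : {set {set 'I_n}}) (a : seq int) : Prop :=
  forall i : nat, (#|[set F in D | #|F| == i]|)%:Z = a`_i.

Definition is_fvector (a : seq int) : Prop :=
  exists n (D : {set {set 'I_n}}), simplicial_complex D /\ has_fvector D a.

Definition is_pure_fvector (a : seq int) : Prop :=
  exists n (D : {set {set 'I_n}}),
    [/\ simplicial_complex D, pure_complex D & has_fvector D a].

(* A monomial in n variables with all exponents < b is a finite function
   'I_n -> 'I_b (every finite multicomplex fits for b large enough). *)
Definition mdeg (n b : nat) (m : {ffun 'I_n -> 'I_b}) : nat :=
  (\sum_(i < n) (m i : nat))%N.

Definition mdivides (n b : nat) (m' m : {ffun 'I_n -> 'I_b}) : Prop :=
  forall i, (m' i <= m i)%N.

Definition multicomplex (n b : nat) (M : {set {ffun 'I_n -> 'I_b}}) : Prop :=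
  forall m m', m \in M -> mdivides m' m -> m' \in M.

Definition is_max_monomial (n b : nat) (M : {set {ffun 'I_n -> 'I_b}})
  (m : {ffun 'I_n -> 'I_b}) : Prop :=
  m \in M /\ forall m', m' \in M -> mdivides m m' -> m' = m.

Definition pure_multicomplex (n b : nat) (M : {set {ffun 'I_n -> 'I_b}}) : Prop :=
  forall m m', is_max_monomial M m -> is_max_monomial M m' -> mdeg m = mdeg m'.

Definition has_Mvector (n b : nat) (M : {set {ffun 'I_n -> 'I_b}}) (a : seq int)
  : Prop :=
  forall i : nat, (#|[set m in M | mdeg m == i]|)%:Z = a`_i.

Definition is_Mvector (a : seq int) : Prop :=
  exists n b (M : {set {ffun 'I_n -> 'I_b}}), multicomplex M /\ has_Mvector M a.

Definition is_pure_Mvector (a : seq int) : Prop :=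
  exists n b (M : {set {ffun 'I_n -> 'I_b}}),
    [/\ multicomplex M, pure_multicomplex M & has_Mvector M a].

Definition h_poly (d : nat) (h : seq int) : {poly int} :=
  \sum_(i < d.+1) h`_i *: 'X^i.

Definition is_gamma_expansion (d : nat) (h gam : seq int) : Prop :=
  size gam = d./2.+1 /\
  h_poly d h = \sum_(i < d./2.+1) gam`_i *: ('X^i * (1 + 'X) ^+ (d - 2 * i)).

Definition gvector (d : nat) (h : seq int) : seq int :=
  [seq (if i == 0%N then h`_0 else h`_i - h`_(i.-1)) | i <- iota 0 d./2.+1].

Definition SI_sequence (d : nat) (h : seq int) : Prop :=
  [/\ size h = d.+1, h`_0 = 1,
      (forall i, (i <= d)%N -> h`_i = h`_(d - i)) & is_Mvector (gvector d h)].

From HB Require Import structures.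
From mathcomp Require Import all_boot all_order all_algebra.
From mathcomp Require Import zify.
Set Implicit Arguments. Unset Strict Implicit. Unset Printing Implicit Defensive.
Import Order.TTheory GRing.Theory Num.Theory.

(* Realise the g-vector as the f-vector of a pure simplicial complex.  Call
   t a ballot subset of [0, m) if every initial segment [0, z] contains at
   most (z + 1)/2 elements of t; by the ballot recursion there are
   'C(m, j) - 'C(m, j - 1) of them of size j when 2j <= m + 1, and none when
   2j > m.  If D has f-vector gamma, let G consist of the disjoint unions
   s + t with s in D and t a ballot subset of [0, d - 2|s|).  Reading off
   the coefficient of x^k in the gamma-expansion gives
   h_k = sum_i gamma_i 'C(d - 2i, k - i), so counting the faces of G by the
   size of s yields exactly g_k.  A ballot subset of [0, m) with fewer than
   floor(m/2) elements can always be extended, so every facet of G has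
   floor(d/2) elements.  Squarefree monomials turn the pure complex G into a
   pure multicomplex, and an M-vector as g-vector makes h an SI-sequence. *)

Section Ballots.
Variable d : nat.
Implicit Types (m j : nat) (t : {set 'I_d}).

Definition ballot m t : bool :=
  [forall x in t, x < m] &&
  [forall z : 'I_d, 2 * #|[set y in t | y <= z]| <= z.+1].

Lemma ballotP m t :
  reflect ((forall x, x \in t -> x < m) /\
           forall z : 'I_d, 2 * #|[set y in t | y <= z]| <= z.+1)
          (ballot m t).
Proof. by apply: (iffP andP) => -[/forall_inP ? /forallP ?]. Qed.

Lemma ballot0 m : ballot m set0.
Proof.
apply/ballotP; split=> [x|z]; first by rewrite inE.
by rewrite (_ : [set y in _ | _] = set0) ?cards0 //; apply/setP => y; rewrite !inE.
Qed.

Lemma ballot_subset m m' t t' : m <= m' -> t' \subset t -> ballot m t -> ballot m' t'.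
Proof.
move=> le_mm' /subsetP sub_t't /ballotP[lt_t prefix_t]; apply/ballotP; split.
  by move=> x /sub_t't /lt_t /leq_trans; apply.
move=> z; apply: leq_trans (prefix_t z); rewrite leq_mul2l subset_leq_card ?orbT //.
by apply/subsetP => y; rewrite !inE => /andP[/sub_t't -> ->].
Qed.

Lemma ballot_card m t : m <= d -> ballot m t -> 2 * #|t| <= m.
Proof.
case: m => [|m] le_md /ballotP[lt_t prefix_t].
  by rewrite (eq_card0 (A := t)) // => x; apply/negbTE/negP => /lt_t.
have := prefix_t (Ordinal le_md); congr (2 * _ <= _); apply: eq_card => y.
by rewrite !inE /=; case yt: (y \in t) => //; have := lt_t _ yt.
Qed.

Definition ballot_count m j := #|[set t | ballot m t & #|t| == j]|.

Lemma ballot_count0 m : ballot_count m 0 = 1.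
Proof.
rewrite -(cards1 (set0 : {set 'I_d})); apply: eq_card => t.
by rewrite !inE cards_eq0 andbC; case: eqP => [->|] //=; rewrite ballot0.
Qed.

Lemma ballot_count_eq0 m j : m <= d -> m < 2 * j -> ballot_count m j = 0.
Proof.
move=> le_md lt_mj; apply: eq_card0 => t; rewrite !inE.
apply/negbTE/negP => /andP[/(ballot_card le_md) + /eqP card_t].
by rewrite card_t leqNgt lt_mj.
Qed.

Section TopElement.
Variables (m : nat) (lt_md : m < d).
Local Notation om := (Ordinal lt_md).

Lemma ballot_notin t : ballot m t -> om \notin t.
Proof. by move=> /ballotP[lt_t _]; apply/negP => /lt_t; rewrite ltnn. Qed.

Lemma ballot_setU1 t : ballot m t -> 2 * #|t|.+1 <= m.+1 -> ballot m.+1 (om |: t).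
Proof.
move=> /ballotP[lt_t prefix_t] card_t; apply/ballotP; split.
  by move=> x; rewrite !inE => /predU1P[-> //|/lt_t/ltnW].
move=> z; have [lt_zm|le_mz] := ltnP z m.
  apply: leq_trans (prefix_t z); rewrite leq_mul2l subset_leq_card ?orbT //.
  apply/subsetP => y; rewrite !inE => /andP[/predU1P[-> /=|-> //]]; lia.
apply: leq_trans (_ : 2 * #|t|.+1 <= _); last lia.
rewrite leq_mul2l; apply/orP; right; apply: leq_trans (_ : #|om |: t| <= _).
  by apply: subset_leq_card; apply/subsetP => y; rewrite inE => /andP[].
by rewrite cardsU1 -add1n leq_add2r leq_b1.
Qed.

Lemma ballot_setD1 t : ballot m.+1 t -> ballot m (t :\ om).
Proof.
move=> /(ballot_subset (leqnn _) (subsetDl t [set om])) /ballotP[lt_t prefix_t].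
apply/ballotP; split=> // x xt; have := lt_t x xt; rewrite ltnS leq_eqVlt.
case/predU1P=> // x_eq; move: xt; rewrite !inE => /andP[].
by rewrite -val_eqE /= x_eq eqxx.
Qed.

Lemma ballotS t : om \notin t -> ballot m.+1 t = ballot m t.
Proof.
move=> nt; apply/idP/idP; last exact: ballot_subset (leqnSn m) (subxx t).
by move=> /ballot_setD1; rewrite (setDidPl _) // disjoint_sym disjoints1.
Qed.

Lemma card_ballot_mem j :
  #|[set t | [&& ballot m.+1 t, om \in t & #|t| == j.+1]]| =
  if 2 * j.+1 <= m.+1 then ballot_count m j else 0.
Proof.
case: ifP => [le_jm|gt_jm]; last first.
  apply: eq_card0 => t; rewrite !inE; apply/negbTE/negP => /and3P[bt _ /eqP card_t].
  by have := ballot_card lt_md bt; rewrite card_t gt_jm.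
rewrite -[RHS](@card_in_imset _ _ (fun t => om |: t)); last first.
  move=> t1 t2; rewrite !inE => /andP[/ballot_notin n1 _] /andP[/ballot_notin n2 _] e.
  by rewrite -(setU1K n1) -(setU1K n2) e.
apply: eq_card => t; rewrite inE; apply/and3P/imsetP => [[bt ot /eqP card_t]|[t']].
  exists (t :\ om); last by rewrite setD1K.
  by move: card_t; rewrite inE ballot_setD1 // (cardsD1 om) ot add1n => -[->] /=.
rewrite inE => /andP[bt' /eqP card_t'] ->.
by rewrite ballot_setU1 ?card_t' // setU11 cardsU1 ballot_notin // card_t'.
Qed.

Lemma ballot_countS j : ballot_count m.+1 j.+1 =
  ballot_count m j.+1 + (if 2 * j.+1 <= m.+1 then ballot_count m j else 0).
Proof.
rewrite -card_ballot_mem /ballot_count -(cardsID [set t : {set 'I_d} | om \in t]) addnC.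
congr (_ + _); apply: eq_card => t; rewrite !inE.
  case: (boolP (om \in t)) => [ot|nt] /=; last by rewrite ballotS.
  by apply/esym/negbTE/negP => /andP[/ballot_notin]; rewrite ot.
by rewrite -andbA (andbC (_ == _)).
Qed.

End TopElement.

Lemma ballot_extend m t : m <= d -> ballot m t -> 2 * #|t| + 2 <= m ->
  exists2 y, y \notin t & ballot m (y |: t).
Proof.
elim: m t => [|m IH] t lt_md bt card_t; first by rewrite addn2 in card_t.
have [ot|nt] := boolP (Ordinal lt_md \in t); last first.
  by exists (Ordinal lt_md); rewrite // ballot_setU1 -?(ballotS nt) //; lia.
have card_tD1 : #|t| = #|t :\ Ordinal lt_md|.+1 by rewrite (cardsD1 (Ordinal lt_md)) ot.
have [|y nt'y bt'y] := IH _ (ltnW lt_md) (ballot_setD1 lt_md bt); first lia.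
have y_neq : y != Ordinal lt_md.
  apply/eqP => y_om; move/ballotP: bt'y => [/(_ y)].
  by rewrite setU11 y_om ltnn => /(_ isT).
exists y; first by move: nt'y; rewrite !inE y_neq.
by rewrite -(setD1K ot) setUCA ballot_setU1 // cardsU1 nt'y add1n -card_tD1; lia.
Qed.

End Ballots.

Section Join.
Variables n d : nat.
Implicit Types (X Y : {set 'I_(n + d)}) (s : {set 'I_n}) (t : {set 'I_d}).

Definition lpart X : {set 'I_n} := [set x | @lshift n d x \in X].
Definition rpart X : {set 'I_d} := [set y | @rshift n d y \in X].
Definition glue s t : {set 'I_(n + d)} := @lshift n d @: s :|: @rshift n d @: t.

Lemma lpart_glue s t : lpart (glue s t) = s.
Proof.
apply/setP => x; rewrite !inE mem_imset; last exact: lshift_inj.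
by case: (x \in s) => //=; apply/imsetP => -[y _ /eqP]; rewrite eq_lrshift.
Qed.

Lemma rpart_glue s t : rpart (glue s t) = t.
Proof.
apply/setP => y; rewrite !inE (mem_imset _ _ (@rshift_inj _ _)) orbC.
by case: (y \in t) => //=; apply/imsetP => -[x _ /eqP]; rewrite eq_sym eq_lrshift.
Qed.

Lemma glueK X : glue (lpart X) (rpart X) = X.
Proof.
apply/setP => z; rewrite !inE; case: (split_ordP z) => [x|y] ->.
  rewrite mem_imset ?inE; last exact: lshift_inj.
  by case: (_ \in X) => //=; apply/imsetP => -[y _ /eqP]; rewrite eq_lrshift.
rewrite (mem_imset _ _ (@rshift_inj _ _)) inE orbC.
by case: (_ \in X) => //=; apply/imsetP => -[x _ /eqP]; rewrite eq_sym eq_lrshift.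
Qed.

Lemma card_glue s t : #|glue s t| = #|s| + #|t|.
Proof.
rewrite cardsU (card_imset _ (@lshift_inj _ _)) (card_imset _ (@rshift_inj _ _)).
rewrite (_ : _ :&: _ = set0) ?cards0 ?subn0 //; apply/setP => z; rewrite !inE.
by apply/negbTE/negP => /andP[/imsetP[x _ ->] /imsetP[y _ /eqP]]; rewrite eq_lrshift.
Qed.

Lemma glue_inj : injective (fun p => glue p.1 p.2).
Proof.
move=> [s t] [s' t'] /= eq_glue; congr (_, _).
  by rewrite -(lpart_glue s t) eq_glue lpart_glue.
by rewrite -(rpart_glue s t) eq_glue rpart_glue.
Qed.

Lemma card_parts X : #|X| = #|lpart X| + #|rpart X|.
Proof. by rewrite -{1}(glueK X) card_glue. Qed.

Lemma lpartS X Y : X \subset Y -> lpart X \subset lpart Y.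
Proof. by move=> /subsetP XY; apply/subsetP => x; rewrite !inE => /XY. Qed.

Lemma rpartS X Y : X \subset Y -> rpart X \subset rpart Y.
Proof. by move=> /subsetP XY; apply/subsetP => y; rewrite !inE => /XY. Qed.

Variable D : {set {set 'I_n}}.

Definition ballot_join : {set {set 'I_(n + d)}} :=
  [set X | (lpart X \in D) && ballot (d - 2 * #|lpart X|) (rpart X)].

Lemma mem_ballot_join s t :
  (glue s t \in ballot_join) = (s \in D) && ballot (d - 2 * #|s|) t.
Proof. by rewrite inE lpart_glue rpart_glue. Qed.

Lemma ballot_join_complex : simplicial_complex D -> simplicial_complex ballot_join.
Proof.
move=> D_complex X Y; rewrite !inE => /andP[lX_D bX] YX.
rewrite (D_complex _ _ lX_D (lpartS YX)); apply: (ballot_subset _ (rpartS YX) bX).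
by rewrite leq_sub2l // leq_mul2l subset_leq_card ?lpartS ?orbT.
Qed.

Lemma card_ballot_join_faces k :
  #|[set X in ballot_join | #|X| == k]| =
  \sum_(s in D) if #|s| <= k then ballot_count d (d - 2 * #|s|) (k - #|s|) else 0.
Proof.
have -> : [set X in ballot_join | #|X| == k] =
    [set glue p.1 p.2 | p in [set p : {set 'I_n} * {set 'I_d} |
      [&& p.1 \in D, ballot (d - 2 * #|p.1|) p.2 & #|p.1| + #|p.2| == k]]].
  apply/setP => X; rewrite inE; apply/andP/imsetP => [[XJ /eqP <-]|[[s t]]].
    exists (lpart X, rpart X); last by rewrite glueK.
    by move: XJ; rewrite -{1}(glueK X) mem_ballot_join inE -card_parts eqxx andbT.
  by rewrite inE /= => /and3P[sD bt /eqP <-] ->; rewrite mem_ballot_join sD bt card_glue.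
rewrite (card_imset _ glue_inj).
transitivity (\sum_(s in D)
  \sum_(t : {set 'I_d} | ballot (d - 2 * #|s|) t && (#|s| + #|t| == k)) 1).
  by rewrite pair_big_dep sum1dep_card; apply: eq_card => -[s t]; rewrite !inE.
apply: eq_bigr => s _; rewrite sum1dep_card.
case: leqP => [le_sk|lt_ks].
  by apply: eq_card => t; rewrite !inE; congr (_ && _); apply/eqP/eqP; lia.
by apply: eq_card0 => t; rewrite !inE; apply/negbTE/negP => /andP[_ /eqP]; lia.
Qed.

Hypothesis D_small : forall s, s \in D -> 2 * #|s| <= d.

Lemma ballot_join_facet X : is_facet ballot_join X -> #|X| = d./2.
Proof.
move=> [XJ maxX]; move: XJ; rewrite inE card_parts => /andP[sD bt].
have le_sd := D_small sD; have := ballot_card (leq_subr _ _) bt.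
have [lt_td|le_dt] := ltnP (d - 2 * #|lpart X|) (2 * #|rpart X| + 2).
  by rewrite -divn2; lia.
have [y nty bty] := ballot_extend (leq_subr _ _) bt le_dt.
have Xy_J : glue (lpart X) (y |: rpart X) \in ballot_join by rewrite mem_ballot_join sD.
have X_Xy : X \subset glue (lpart X) (y |: rpart X).
  by rewrite -{1}(glueK X) setUS // imsetS // subsetUr.
by move: nty; rewrite -(maxX _ Xy_J X_Xy) rpart_glue setU11.
Qed.

Lemma ballot_join_pure : pure_complex ballot_join.
Proof. by move=> X Y /ballot_join_facet -> /ballot_join_facet ->. Qed.

End Join.

Local Open Scope ring_scope.

Definition ballot_number (m j : nat) : int :=
  'C(m, j)%:Z - (if j is j'.+1 then 'C(m, j')%:Z else 0).

Lemma ballot_countE d m j : (m <= d)%N -> (2 * j <= m.+1)%N ->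
  (ballot_count d m j)%:Z = ballot_number m j.
Proof.
elim: m j => [|m IH] [|j] le_md le_jm;
  rewrite ?ballot_count0 /ballot_number ?bin0 ?subr0 //.
  by rewrite mulnS in le_jm.
have [eq_jm|ne_jm] := eqVneq (2 * j.+1)%N m.+2.
  rewrite ballot_count_eq0 ?eq_jm // (_ : m.+1 = j + j.+1)%N; last by lia.
  by rewrite -{1}(bin_sub (leq_addr j.+1 j)) addKn subrr.
rewrite ballot_countS // ifT; last by lia.
rewrite PoszD !IH; try lia.
rewrite /ballot_number; case: j {le_jm ne_jm} => [|j]; first by rewrite !bin1 !bin0; lia.
by rewrite (binS m j.+1) (binS m j) !PoszD; lia.
Qed.

Lemma sum_by_card n (D : {set {set 'I_n}}) B (F : nat -> nat) :
  (forall s, s \in D -> #|s| <= B)%N ->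
  (\sum_(s in D) F #|s| = \sum_(i < B.+1) #|[set s in D | #|s| == i]| * F i)%N.
Proof.
move=> le_DB.
rewrite (partition_big (fun s : {set 'I_n} => inord #|s| : 'I_B.+1) predT) //=.
apply: eq_bigr => i _; rewrite -sum_nat_const; apply: eq_big => s; last first.
  by move=> /andP[sD /eqP <-]; rewrite inordK // ltnS le_DB.
rewrite !inE; case sD: (s \in D) => //=.
by rewrite -val_eqE /= inordK ?ltnS ?le_DB.
Qed.

Lemma fvector_card_lt n (D : {set {set 'I_n}}) a s :
  has_fvector D a -> s \in D -> (#|s| < size a)%N.
Proof.
move=> fD sD; rewrite ltnNge; apply/negP => le_as.
have := fD #|s|; rewrite nth_default // => -[] /eqP; rewrite cards_eq0 => /eqP/setP/(_ s).
by rewrite !inE sD eqxx.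
Qed.

Lemma coef_1DXn n j : ((1 + 'X : {poly int}) ^+ n)`_j = 'C(n, j)%:R.
Proof.
elim: n j => [|n IH] j; first by rewrite expr0 coef1 bin0n; case: j.
rewrite exprS mulrDl mul1r coefD coefXM IH; case: j => [|j] /=.
  by rewrite !bin0 addr0.
by rewrite IH binS natrD addrC.
Qed.

Lemma gamma_expansion_coef d h gam k : is_gamma_expansion d h gam -> (k <= d)%N ->
  h`_k = \sum_(i < d./2.+1) gam`_i * (if (i <= k)%N then 'C(d - 2 * i, k - i)%:R else 0).
Proof.
move=> [_ /(congr1 (fun p : {poly int} => p`_k))] + le_kd.
rewrite /h_poly -poly_def coef_poly ltnS le_kd coef_sum => ->.
apply: eq_bigr => i _; rewrite coefZ coefXnM coef_1DXn.
by rewrite ltnNge; case: (i <= k)%N.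
Qed.

Lemma nth_gvector_gamma d h gam k : is_gamma_expansion d h gam -> (k <= d./2)%N ->
  (gvector d h)`_k =
  \sum_(i < d./2.+1) gam`_i * (if (i <= k)%N then ballot_number (d - 2 * i) (k - i) else 0).
Proof.
move=> ge le_kd; have le_kd' : (k <= d)%N by rewrite (leq_trans le_kd) // -divn2 leq_div.
rewrite /gvector (nth_map 0%N) ?size_iota ?nth_iota // add0n.
case: k le_kd le_kd' => [|k] le_kd le_kd' /=.
  rewrite (gamma_expansion_coef ge) //; apply: eq_bigr => i _.
  by case: ifP => // _; rewrite sub0n /ballot_number bin0 subr0.
rewrite !(gamma_expansion_coef ge) ?(ltnW le_kd') // -sumrB.
apply: eq_bigr => i _; rewrite -mulrBr; congr (_ * _).
have [le_ik|lt_ki] := leqP i k.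
  by rewrite leqW // subSn // /ballot_number !natz.
rewrite subr0 leq_eqVlt ltnS leqNgt lt_ki orbF.
by case: eqP => // ->; rewrite subnn /ballot_number bin0 subr0.
Qed.

Lemma ballot_join_fvector n d (D : {set {set 'I_n}}) h gam :
  is_gamma_expansion d h gam -> has_fvector D gam ->
  has_fvector (ballot_join d D) (gvector d h).
Proof.
move=> ge fD k; have le_D s : s \in D -> (#|s| <= d./2)%N.
  by move=> /(fvector_card_lt fD); rewrite ge.1.
pose c i := (if i <= k then ballot_count d (d - 2 * i) (k - i) else 0)%N.
rewrite card_ballot_join_faces (sum_by_card c le_D) -natz natr_sum /c.
have [le_kd|lt_dk] := leqP k d./2.
  rewrite (nth_gvector_gamma ge le_kd); apply: eq_bigr => i _.
  rewrite natrM natz fD; congr (_ * _); case: ifP => // le_ik.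
  rewrite natz ballot_countE ?leq_subr //.
  by move: (ltn_ord i) le_kd; rewrite ltnS !geq_half_double -!mul2n; lia.
rewrite nth_default ?size_map ?size_iota //; apply: big1 => i _.
case: ifP => [le_ik|_]; last by rewrite muln0.
rewrite ballot_count_eq0 ?muln0 ?leq_subr //.
by move: (ltn_ord i) lt_dk; rewrite ltnS geq_half_double ltn_half_double -!mul2n; lia.
Qed.

Section SquarefreeMonomials.
Variable n : nat.
Implicit Types (m : {ffun 'I_n -> 'I_2}) (F : {set 'I_n}) (D : {set {set 'I_n}}).

Definition msupp m : {set 'I_n} := [set x | m x != ord0].
Definition sqfree F : {ffun 'I_n -> 'I_2} := [ffun x => inord (x \in F)].

Lemma val_ord2 (v : 'I_2) : val v = (v != ord0).
Proof. by case: v => [[|[|v]] //]. Qed.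

Lemma sqfreeK : cancel sqfree msupp.
Proof.
move=> F; apply/setP => x; rewrite !inE ffunE.
by case: (x \in F); rewrite -val_eqE /= inordK.
Qed.

Lemma msuppK : cancel msupp sqfree.
Proof.
move=> m; apply/ffunP => x; apply/val_inj.
by rewrite ffunE inE /= inordK -val_ord2 ?ltn_ord.
Qed.

Lemma mdeg_msupp m : mdeg m = #|msupp m|.
Proof.
rewrite /mdeg -sum1_card [RHS]big_mkcond /=; apply: eq_bigr => x _.
by rewrite inE val_ord2; case: (_ != _).
Qed.

Lemma mdivides_subset m m' : mdivides m' m <-> msupp m' \subset msupp m.
Proof.
rewrite /mdivides; split=> [le_m'm|/subsetP sub_m'm x].
  apply/subsetP => x; rewrite !inE; have := le_m'm x; rewrite !val_ord2.
  by case: (m' x != ord0); case: (m x != ord0).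
have := sub_m'm x; rewrite !inE !val_ord2.
by case: (m' x != ord0); case: (m x != ord0) => // /(_ isT).
Qed.

Definition sqfree_multicomplex D : {set {ffun 'I_n -> 'I_2}} := [set m | msupp m \in D].

Lemma sqfree_multicomplexP D : simplicial_complex D -> multicomplex (sqfree_multicomplex D).
Proof. by move=> D_complex m m'; rewrite !inE => mD /mdivides_subset; apply: D_complex. Qed.

Lemma sqfree_max_monomial D m :
  is_max_monomial (sqfree_multicomplex D) m -> is_facet D (msupp m).
Proof.
move=> [mM max_m]; rewrite inE in mM; split=> // F FD sub_mF.
have FM : sqfree F \in sqfree_multicomplex D by rewrite inE sqfreeK.
by rewrite -(max_m _ FM) ?sqfreeK // mdivides_subset sqfreeK.
Qed.

Lemma sqfree_multicomplex_pure D :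
  pure_complex D -> pure_multicomplex (sqfree_multicomplex D).
Proof.
move=> D_pure m m' /sqfree_max_monomial Dm /sqfree_max_monomial Dm'.
by rewrite !mdeg_msupp; apply: D_pure.
Qed.

Lemma sqfree_multicomplex_Mvector D a :
  has_fvector D a -> has_Mvector (sqfree_multicomplex D) a.
Proof.
move=> fD i; rewrite -fD -(card_imset _ (can_inj msuppK)); congr (Posz _).
apply: eq_card => F.
apply/imsetP/idP => [[m]|].
  by rewrite !inE => /andP[mD /eqP deg_m] ->; rewrite mD -mdeg_msupp deg_m eqxx.
rewrite !inE => /andP[FD /eqP card_F]; exists (sqfree F); rewrite ?sqfreeK //.
by rewrite !inE sqfreeK FD mdeg_msupp sqfreeK card_F eqxx.
Qed.

End SquarefreeMonomials.

Lemma pure_fvector_Mvector a : is_pure_fvector a -> is_pure_Mvector a.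
Proof.
move=> [n [D [D_complex D_pure fD]]]; exists n, 2%N, (sqfree_multicomplex D); split.
- exact: sqfree_multicomplexP.
- exact: sqfree_multicomplex_pure.
- exact: sqfree_multicomplex_Mvector.
Qed.

Theorem proposition8p2 (d : nat) (h gam : seq int) :
  size h = d.+1 ->
  h`_0 = 1 ->
  (forall i : nat, (i <= d)%N -> h`_i = h`_(d - i)) ->
  is_gamma_expansion d h gam ->
  is_fvector gam ->
  [/\ is_pure_fvector (gvector d h), is_pure_Mvector (gvector d h)
    & SI_sequence d h].
Proof.
move=> size_h h0 h_sym ge [n [D [D_complex fD]]].
have D_small s : s \in D -> (2 * #|s| <= d)%N.
  by move=> /(fvector_card_lt fD); rewrite ge.1 ltnS geq_half_double mul2n.
have g_pure : is_pure_fvector (gvector d h).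
  exists (n + d)%N, (ballot_join d D); split.
  - exact: ballot_join_complex.
  - exact: ballot_join_pure D_small.
  - exact: ballot_join_fvector ge fD.
have [n' [b [M [M_multi _ gM]]]] := pure_fvector_Mvector g_pure.
split=> //; first exact: pure_fvector_Mvector.
by split=> //; exists n', b, M.
Qed.
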